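(* Let $a>0$ and let $\mathcal{G}$ be the real Lie algebra with basis $X_1,X_2,X_3$ and brackets $[X_1,X_2]=-aX_2+X_3$, $[X_2,X_3]=0$, $[X_3,X_1]=X_2+aX_3$ (Bianchi type $VII_a$). Every real Manin triple $(\mathcal{D},\mathcal{G}',\tilde{\mathcal{G}}')$ with $\mathcal{G}'\cong\mathcal{G}$ is isomorphic to exactly one Manin triple $(\mathcal{D},\mathcal{G},\tilde{\mathcal{G}})$ in which $\tilde{\mathcal{G}}$, in the basis $\tilde X^1,\tilde X^2,\tilde X^3$ dual to $X_1,X_2,X_3$, has one of the following bracket structures: (a) (Bianchi $I$) all brackets zero; (b) (Bianchi $II$) (i) $[\tilde X^1,\tilde X^2]=0$, $[\tilde X^2,\tilde X^3]=\tilde X^1$, $[\tilde X^3,\tilde X^1]=0$; (ii) $[\tilde X^1,\tilde X^2]=0$, $[\tilde X^2,\tilde X^3]=-\tilde X^1$, $[\tilde X^3,\tilde X^1]=0$; (c) (Bianchi $VII_{1/a}$) $[\tilde X^1,\tilde X^2]=b(-\tfrac1a\tilde X^2+\tilde X^3)$, $[\tilde X^2,\tilde X^3]=0$, $[\tilde X^3,\tilde X^1]=b(\tilde X^2+\tfrac1a\tilde X^3)$, with $b\in\mathbb{R}\setminus\{0\}$.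
   Context: A real Manin triple $(\mathcal{D},\mathcal{G},\tilde{\mathcal{G}})$ consists of a real Lie algebra $\mathcal{D}$ with a symmetric, ad-invariant, nondegenerate bilinear form $\langle\cdot,\cdot\rangle$, and two maximally isotropic Lie subalgebras $\mathcal{G},\tilde{\mathcal{G}}$ with $\mathcal{D}=\mathcal{G}\oplus\tilde{\mathcal{G}}$ as vector spaces; here $\dim\mathcal{D}=6$, $\dim\mathcal{G}=\dim\tilde{\mathcal{G}}=3$. Bases $X_i$ of $\mathcal{G}$ and $\tilde X^i$ of $\tilde{\mathcal{G}}$ are dual if $\langle X_i,X_j\rangle=0$, $\langle X_i,\tilde X^j\rangle=\delta_i^j$, $\langle\tilde X^i,\tilde X^j\rangle=0$. If $[X_i,X_j]=f_{ij}{}^kX_k$ and $[\tilde X^i,\tilde X^j]=\tilde f^{ij}{}_k\tilde X^k$, ad-invariance forces $[X_i,\tilde X^j]=f_{ki}{}^j\tilde X^k+\tilde f^{jk}{}_iX_k$, so the triple is determined by the brackets of $\mathcal{G}$ and $\tilde{\mathcal{G}}$ in dual bases. Two Manin triples are isomorphic if there is a Lie algebra isomorphism of the doubles preserving the bilinear forms and mapping first subalgebra to first subalgebra and second to second; equivalently, they are related by a change of basis $X_i'=X_kA^k{}_i$, $\tilde X'^j=(A^{-1})^j{}_k\tilde X^k$. Different values of the parameter $b$ give non-isomorphic triples. *)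

From HB Require Import structures.
From mathcomp Require Import all_boot all_order all_algebra.
From mathcomp Require Import reals.
Set Implicit Arguments. Unset Strict Implicit. Unset Printing Implicit Defensive.
Import Order.TTheory GRing.Theory Num.Theory.
Local Open Scope ring_scope.

Section Defs.
Variable R : realType.

(* Structure constants of a 3-dim algebra: [e_i, e_j] = \sum_k sc i j k e_k. *)
Definition strconst := 'I_3 -> 'I_3 -> 'I_3 -> R.

Definition vec3 (x y z : R) : 'I_3 -> R := fun k => nth 0 [:: x; y; z] k.

(* structure constants from [e1,e2] = c12, [e2,e3] = c23, [e3,e1] = c31
   (indices 0,1,2 stand for 1,2,3) *)
Definition sc_of (c12 c23 c31 : 'I_3 -> R) : strconst :=
  fun i j k =>
    match nat_of_ord i, nat_of_ord j with
    | 0%N, 1%N => c12 k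
    | 1%N, 0%N => - c12 k
    | 1%N, 2%N => c23 k
    | 2%N, 1%N => - c23 k
    | 2%N, 0%N => c31 k
    | 0%N, 2%N => - c31 k
    | _, _ => 0
    end.

(* Structure constants of the double D = G (+) G~ in the basis
   (X_1,X_2,X_3, X~^1,X~^2,X~^3) (inl i = X_i, inr i = X~^i), with
   [X_i,X_j] = f_ij^k X_k, [X~^i,X~^j] = ft^ij_k X~^k,
   [X_i,X~^j] = f_ki^j X~^k + ft^jk_i X_k  (forced by ad-invariance of the
   canonical pairing <X_i,X~^j> = delta_i^j). *)
Definition double_sc (f ft : strconst) :
    'I_3 + 'I_3 -> 'I_3 + 'I_3 -> 'I_3 + 'I_3 -> R :=
  fun a b c =>
    match a, b, c with
    | inl i, inl j, inl k => f i j k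
    | inl _, inl _, inr _ => 0
    | inr i, inr j, inr k => ft i j k
    | inr _, inr _, inl _ => 0
    | inl i, inr j, inl k => ft j k i
    | inl i, inr j, inr k => f k i j
    | inr j, inl i, inl k => - ft j k i
    | inr j, inl i, inr k => - f k i j
    end.

(* A real Manin triple given by dual bases: the double is a Lie algebra
   (antisymmetry + Jacobi identity). The subspaces G, G~ are then
   maximally isotropic Lie subalgebras for the canonical pairing, which is
   symmetric, nondegenerate and (by construction of the bracket) ad-invariant. *)
Definition manin_triple (f ft : strconst) : Prop :=
  (forall a b c, double_sc f ft a b c = - double_sc f ft b a c) /\
  (forall a b c e,
     \sum_(d : 'I_3 + 'I_3)
       (double_sc f ft a b d * double_sc f ft d c e
      + double_sc f ft b c d * double_sc f ft d a e
      + double_sc f ft c a d * double_sc f ft d b e) = 0).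

(* change of basis X'_i = X_k A^k_i : new structure constants of G *)
Definition transf (A : 'M[R]_3) (f : strconst) : strconst :=
  fun i j n => \sum_(k < 3) \sum_(l < 3) \sum_(m < 3)
                 A k i * A l j * f k l m * invmx A n m.

(* dual change of basis X~'^j = (A^-1)^j_k X~^k : new structure constants of G~ *)
Definition transd (A : 'M[R]_3) (ft : strconst) : strconst :=
  fun i j n => \sum_(k < 3) \sum_(l < 3) \sum_(m < 3)
                 invmx A i k * invmx A j l * ft k l m * A m n.

Definition lie_iso (f f' : strconst) : Prop :=
  exists A : 'M[R]_3, A \in unitmx /\ forall i j k, f' i j k = transf A f i j k.

Definition mt_iso (f ft f' ft' : strconst) : Prop :=
  exists A : 'M[R]_3, A \in unitmx /\
    (forall i j k, f' i j k = transf A f i j k) /\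
    (forall i j k, ft' i j k = transd A ft i j k).

Definition bianchiVII (a : R) : strconst :=
  sc_of (vec3 0 (- a) 1) (vec3 0 0 0) (vec3 0 1 a).

Inductive dual_label : Type :=
| L_I
| L_II_i
| L_II_ii
| L_VII of R.

Definition valid_label (l : dual_label) : Prop :=
  match l with L_VII b => b != 0 | _ => True end.

Definition dual_sc (a : R) (l : dual_label) : strconst :=
  match l with
  | L_I => sc_of (vec3 0 0 0) (vec3 0 0 0) (vec3 0 0 0)
  | L_II_i => sc_of (vec3 0 0 0) (vec3 1 0 0) (vec3 0 0 0)
  | L_II_ii => sc_of (vec3 0 0 0) (vec3 (-1) 0 0) (vec3 0 0 0)
  | L_VII b => sc_of (vec3 0 (b * (- a^-1)) b) (vec3 0 0 0) (vec3 0 b (b * a^-1))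
  end.

End Defs.

From HB Require Import structures.
From mathcomp Require Import all_boot all_order all_algebra.
From mathcomp Require Import reals.
From mathcomp Require Import ring lra boolp.
Set Implicit Arguments. Unset Strict Implicit. Unset Printing Implicit Defensive.
Import Order.TTheory GRing.Theory Num.Theory.
Local Open Scope ring_scope.

(* A change of basis A of G together with the contragredient change of the
   dual basis of G~ is a change of basis of the double D, under which the
   structure constants (hence the Jacobiator) transform tensorially; so it
   maps Manin triples to Manin triples and isomorphism of triples is an
   equivalence.  For G = VII_a the Jacobi identity of the double cuts the
   dual brackets down to the family [bianchiVII_dual t s p q] with
   t s = - a (p^2 + q^2).  Automorphisms of VII_a fix X1 modulo span(X2, X3)
   and act on span(X2, X3) as multiplication by a nonzero complex number u.
   If t <> 0 a shear X1 -> X1 + v X2 + w X3 kills p and q, leaving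
   VII_{1/a} with b = - a t; if t = 0 then p = q = 0 and rescaling by u
   multiplies s by |u|^2, leaving Bianchi I or II according to the sign of s.
   Conversely t and the sign of s are invariant under automorphisms. *)

Section ChangeOfBasis.
Variables (R : comPzRingType) (I : finType).
Implicit Types (P Q : I -> I -> R) (D : I -> I -> I -> R).

Definition kronecker (x y : I) : R := (x == y)%:R.

Definition fmul P Q : I -> I -> R := fun x y => \sum_d P x d * Q d y.

(* Structure constants in the basis e'_a = \sum_x P x a e_x, when Q is the
   inverse of the transition matrix P. *)
Definition change_sc P Q D : I -> I -> I -> R :=
  fun a b c => \sum_x \sum_y \sum_z P x a * P y b * D x y z * Q c z.

Definition nested_bracket D a b c e := \sum_d D a b d * D d c e.

Definition jacobiator D a b c e :=
  \sum_d (D a b d * D d c e + D b c d * D d a e + D c a d * D d b e).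

Lemma jacobiatorE D a b c e :
  jacobiator D a b c e =
  nested_bracket D a b c e + nested_bracket D b c a e + nested_bracket D c a b e.
Proof. by rewrite /jacobiator !big_split. Qed.

Lemma sum_kronecker (z : I) (F : I -> R) : \sum_x kronecker x z * F x = F z.
Proof.
rewrite (bigD1 z) //= /kronecker eqxx mul1r big1 ?addr0 // => x /negbTE ->.
exact: mul0r.
Qed.

Lemma kroneckerC x y : kronecker x y = kronecker y x.
Proof. by rewrite /kronecker eq_sym. Qed.

Lemma fmul1l P : fmul kronecker P = P.
Proof.
apply/funext => x; apply/funext => y; rewrite /fmul.
by under eq_bigr do rewrite kroneckerC; rewrite sum_kronecker.
Qed.

Lemma fmul1r P : fmul P kronecker = P.
Proof.
apply/funext => x; apply/funext => y; rewrite /fmul.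
by under eq_bigr do rewrite mulrC; rewrite sum_kronecker.
Qed.

Lemma change_scE P Q D a b c :
  change_sc P Q D a b c = \sum_x P x a * \sum_y P y b * \sum_z D x y z * Q c z.
Proof.
apply: eq_bigr => x _; rewrite big_distrr; apply: eq_bigr => y _.
by rewrite !big_distrr; apply: eq_bigr => z _ /=; ring.
Qed.

Lemma change_sc_kroneckerl Q D a b c :
  change_sc kronecker Q D a b c = \sum_z D a b z * Q c z.
Proof. by rewrite change_scE sum_kronecker sum_kronecker. Qed.

Lemma change_sc_kroneckerr P D a b c :
  change_sc P kronecker D a b c = \sum_x \sum_y P x a * P y b * D x y c.
Proof.
apply: eq_bigr => x _; apply: eq_bigr => y _.
rewrite -(sum_kronecker c (fun z => P x a * P y b * D x y z)).
by apply: eq_bigr => z _; rewrite kroneckerC mulrC.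
Qed.

Lemma change_scN P Q D :
  (forall a b c, D a b c = - D b a c) ->
  forall a b c, change_sc P Q D a b c = - change_sc P Q D b a c.
Proof.
move=> DN a b c; rewrite /change_sc exchange_big -sumrN; apply: eq_bigr => y _.
rewrite -sumrN; apply: eq_bigr => x _; rewrite -sumrN; apply: eq_bigr => z _.
by rewrite DN; ring.
Qed.

Lemma big3_pair (F : I -> I -> I -> R) :
  \sum_x \sum_y \sum_z F x y z = \sum_(t : I * I * I) F t.1.1 t.1.2 t.2.
Proof. by rewrite pair_bigA pair_bigA. Qed.

Lemma exchange_big3 (F : I -> I -> I -> I -> I -> I -> R) :
  \sum_x \sum_y \sum_z \sum_u \sum_v \sum_w F x y z u v w =
  \sum_u \sum_v \sum_w \sum_x \sum_y \sum_z F x y z u v w.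
Proof.
rewrite big3_pair [RHS]big3_pair.
under eq_bigr do rewrite big3_pair.
under [RHS]eq_bigr do rewrite big3_pair.
exact: exchange_big.
Qed.

Lemma rotate_big3 (F : I -> I -> I -> R) :
  \sum_x \sum_y \sum_w F x y w = \sum_x \sum_y \sum_w F y w x.
Proof. by rewrite [RHS]exchange_big; apply: eq_bigr => y _; rewrite exchange_big. Qed.

Lemma change_sc_comp P Q P' Q' D :
  change_sc P Q (change_sc P' Q' D) = change_sc (fmul P' P) (fmul Q Q') D.
Proof.
apply/funext => a; apply/funext => b; apply/funext => c.
transitivity (\sum_x \sum_y \sum_z \sum_u \sum_v \sum_w
  (P' u x * P x a) * (P' v y * P y b) * D u v w * (Q c z * Q' z w)).
  apply: eq_bigr => x _; apply: eq_bigr => y _; apply: eq_bigr => z _.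
  rewrite !big_distrr !big_distrl /=; apply: eq_bigr => u _.
  rewrite !big_distrr !big_distrl /=; apply: eq_bigr => v _.
  rewrite !big_distrr !big_distrl /=; apply: eq_bigr => w _; ring.
rewrite exchange_big3; apply: eq_bigr => u _; apply: eq_bigr => v _; apply: eq_bigr => w _.
rewrite /fmul !big_distrl /=; apply: eq_bigr => x _.
rewrite [RHS]big_distrr /=.
under [RHS]eq_bigr do rewrite big_distrr !big_distrl /=.
by rewrite [RHS]exchange_big; apply: eq_bigr => y _; apply: eq_bigr => z _; ring.
Qed.

Lemma sum_mul_change_sc P Q D x a b : fmul P Q = kronecker ->
  \sum_d P x d * change_sc P Q D a b d = \sum_y \sum_w P y a * P w b * D y w x.
Proof.
move=> PQ; have := change_sc_kroneckerl P (change_sc P Q D) a b x.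
rewrite change_sc_comp fmul1r PQ change_sc_kroneckerr => ->.
by apply: eq_bigr => d _; rewrite mulrC.
Qed.

Lemma sum2_mul_change_sc P' P Q D p q c : fmul P (fun a p => P' p a) = kronecker ->
  \sum_a \sum_b P' p a * P' q b * change_sc P Q D a b c = \sum_z D p q z * Q c z.
Proof.
move=> PP'; have := change_sc_kroneckerr (fun a p => P' p a) (change_sc P Q D) p q c.
by rewrite change_sc_comp fmul1l PP' change_sc_kroneckerl => <-.
Qed.

Lemma nested_bracket_change_sc P Q D a b c e : fmul P Q = kronecker ->
  nested_bracket (change_sc P Q D) a b c e =
  \sum_x \sum_y \sum_w \sum_z P x a * P y b * P w c * Q e z * nested_bracket D x y w z.
Proof.
move=> PQ; rewrite /nested_bracket.
transitivity (\sum_x (\sum_d P x d * change_sc P Q D a b d) *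
  \sum_w P w c * \sum_z D x w z * Q e z).
  under eq_bigr do rewrite [change_sc _ _ _ _ c e]change_scE big_distrr.
  rewrite exchange_big; apply: eq_bigr => x _; rewrite big_distrl.
  by apply: eq_bigr => d _ /=; ring.
under eq_bigr do rewrite sum_mul_change_sc //.
transitivity (\sum_x \sum_y \sum_w \sum_w' \sum_z
  P y a * P w b * P w' c * Q e z * (D y w x * D x w' z)).
  apply: eq_bigr => x _; rewrite big_distrl; apply: eq_bigr => y _.
  rewrite big_distrl; apply: eq_bigr => w _ /=; rewrite big_distrr.
  apply: eq_bigr => w' _ /=; rewrite !big_distrr; apply: eq_bigr => z _ /=; ring.
rewrite exchange_big; apply: eq_bigr => y _; rewrite exchange_big; apply: eq_bigr => w _.
rewrite exchange_big; apply: eq_bigr => w' _; rewrite exchange_big; apply: eq_bigr => z _.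
by rewrite big_distrr.
Qed.

Lemma change_sc_jacobiator P Q D a b c e : fmul P Q = kronecker ->
  jacobiator (change_sc P Q D) a b c e =
  \sum_x \sum_y \sum_w \sum_z P x a * P y b * P w c * Q e z * jacobiator D x y w z.
Proof.
move=> PQ; rewrite jacobiatorE !nested_bracket_change_sc //.
rewrite [X in _ + X + _]rotate_big3 [X in _ + _ + X]rotate_big3 [X in _ + _ + X]rotate_big3.
rewrite -!big_split; apply: eq_bigr => x _; rewrite -!big_split; apply: eq_bigr => y _.
rewrite -!big_split; apply: eq_bigr => w _; rewrite -!big_split; apply: eq_bigr => z _ /=.
by rewrite jacobiatorE; ring.
Qed.
End ChangeOfBasis.
Arguments kronecker {R I}.

Section StructureConstants3.
Variable R : realType.
Implicit Types (A B : 'M[R]_3) (f ft : strconst R).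

Lemma transfE A f : transf A f = change_sc A (invmx A) f.
Proof. by []. Qed.

Lemma transdE A f :
  transd A f = change_sc (fun x i => invmx A i x) (fun n m => A m n) f.
Proof. by []. Qed.

Lemma fmul_mx A B : fmul A B = A *m B.
Proof. by apply/funext => i; apply/funext => j; rewrite mxE. Qed.

Lemma kronecker_mx1 : kronecker = (1%:M : 'M[R]_3).
Proof. by apply/funext => i; apply/funext => j; rewrite mxE. Qed.

Lemma invmxM A B : A \in unitmx -> B \in unitmx ->
  invmx (A *m B) = invmx B *m invmx A.
Proof.
move=> uA uB; have uAB : A *m B \in unitmx by rewrite unitmx_mul uA uB.
have E : A *m B *m (invmx B *m invmx A) = 1%:M.
  by rewrite mulmxA -(mulmxA A) mulmxV // mulmx1 mulmxV.
by rewrite -[LHS]mulmx1 -E mulmxA mulVmx // mul1mx.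
Qed.

Lemma transfM A B f : A \in unitmx -> B \in unitmx ->
  transf B (transf A f) = transf (A *m B) f.
Proof. by move=> uA uB; rewrite !transfE change_sc_comp !fmul_mx invmxM. Qed.

Lemma transdM A B f : A \in unitmx -> B \in unitmx ->
  transd B (transd A f) = transd (A *m B) f.
Proof.
move=> uA uB; rewrite !transdE change_sc_comp invmxM //; congr change_sc.
  by apply/funext => x; apply/funext => i; rewrite mxE; apply: eq_bigr => d _; rewrite mulrC.
by apply/funext => n; apply/funext => m; rewrite mxE; apply: eq_bigr => d _; rewrite mulrC.
Qed.

Lemma change_sc_kronecker f : change_sc kronecker kronecker f = f.
Proof.
apply/funext => i; apply/funext => j; apply/funext => n.
rewrite change_sc_kroneckerl -[RHS](sum_kronecker n (f i j)).
by apply: eq_bigr => m _; rewrite mulrC kroneckerC.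
Qed.

Lemma transf1 f : transf 1%:M f = f.
Proof. by rewrite transfE invmx1 -kronecker_mx1 change_sc_kronecker. Qed.

Lemma transd1 f : transd 1%:M f = f.
Proof.
have K : (fun x i => (1%:M : 'M[R]_3) i x) = kronecker.
  by apply/funext => x; apply/funext => i; rewrite mxE kroneckerC.
by rewrite transdE invmx1 K change_sc_kronecker.
Qed.

Lemma transfK A f : A \in unitmx -> transf (invmx A) (transf A f) = f.
Proof. by move=> uA; rewrite transfM ?unitmx_inv // mulmxV // transf1. Qed.

Lemma transdK A f : A \in unitmx -> transd (invmx A) (transd A f) = f.
Proof. by move=> uA; rewrite transdM ?unitmx_inv // mulmxV // transd1. Qed.

Lemma transf_hom A f p i j : A \in unitmx ->
  \sum_n A p n * transf A f i j n = \sum_k \sum_l A k i * A l j * f k l p.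
Proof. by move=> uA; rewrite transfE sum_mul_change_sc // fmul_mx mulmxV // kronecker_mx1. Qed.

Lemma transd_hom A f p q n : A \in unitmx ->
  \sum_i \sum_j A p i * A q j * transd A f i j n = \sum_m f p q m * A m n.
Proof.
move=> uA; rewrite transdE sum2_mul_change_sc //.
apply/funext => x; apply/funext => i; rewrite /fmul /kronecker eq_sym.
have := congr1 (fun M : 'M[R]_3 => M i x) (mulmxV uA); rewrite !mxE => <-.
by apply: eq_bigr => d _; rewrite mulrC.
Qed.

Lemma strconst_ext f g : (forall i j k, f i j k = g i j k) -> f = g.
Proof. by move=> fg; apply/funext => i; apply/funext => j; apply/funext => k. Qed.

Definition o0 : 'I_3 := @Ordinal 3 0 isT.
Definition o1 : 'I_3 := @Ordinal 3 1 isT.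
Definition o2 : 'I_3 := @Ordinal 3 2 isT.

Lemma ord3P (i : 'I_3) : [\/ i = o0, i = o1 | i = o2].
Proof.
by case: i => [[|[|[|//]]] ?]; [apply: Or31 | apply: Or32 | apply: Or33]; apply: val_inj.
Qed.

Lemma sum3 (F : 'I_3 -> R) : \sum_i F i = F o0 + F o1 + F o2.
Proof.
rewrite !big_ord_recl big_ord0 addr0 addrA.
by congr (_ + _ + _); apply: congr1; apply: val_inj.
Qed.

Definition double_mx A (u v : 'I_3 + 'I_3) : R :=
  match u, v with
  | inl k, inl i => A k i | inr k, inr j => invmx A j k | _, _ => 0
  end.

Definition double_invmx A (u v : 'I_3 + 'I_3) : R :=
  match u, v with
  | inl i, inl k => invmx A i k | inr j, inr k => A k j | _, _ => 0
  end.

Lemma sum_double_mx_inl A i (G : 'I_3 + 'I_3 -> R) :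
  \sum_x double_mx A x (inl i) * G x = \sum_k A k i * G (inl k).
Proof. by rewrite big_sumType /= [X in _ + X]big1 ?addr0 // => k _; rewrite mul0r. Qed.

Lemma sum_double_mx_inr A i (G : 'I_3 + 'I_3 -> R) :
  \sum_x double_mx A x (inr i) * G x = \sum_k invmx A i k * G (inr k).
Proof. by rewrite big_sumType /= [X in X + _]big1 ?add0r // => k _; rewrite mul0r. Qed.

Lemma sum_double_invmx_inl A i (G : 'I_3 + 'I_3 -> R) :
  \sum_x G x * double_invmx A (inl i) x = \sum_k G (inl k) * invmx A i k.
Proof. by rewrite big_sumType /= [X in _ + X]big1 ?addr0 // => k _; rewrite mulr0. Qed.

Lemma sum_double_invmx_inr A i (G : 'I_3 + 'I_3 -> R) :
  \sum_x G x * double_invmx A (inr i) x = \sum_k G (inr k) * A k i.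
Proof. by rewrite big_sumType /= [X in X + _]big1 ?add0r // => k _; rewrite mulr0. Qed.

Lemma double_mxK A : A \in unitmx -> fmul (double_mx A) (double_invmx A) = kronecker.
Proof.
move=> uA; apply/funext => x; apply/funext => y; rewrite /fmul big_sumType /kronecker.
case: x => [k|k]; case: y => [l|l] /=.
- rewrite [X in _ + X]big1 ?addr0; last by move=> i _; rewrite mulr0.
  by have := congr1 (fun M : 'M[R]_3 => M k l) (mulmxV uA); rewrite !mxE => <-.
- by rewrite !big1 ?addr0 // => i _; rewrite ?mulr0 ?mul0r.
- by rewrite !big1 ?addr0 // => i _; rewrite ?mulr0 ?mul0r.
- rewrite [X in X + _]big1 ?add0r; last by move=> i _; rewrite mul0r.
  have := congr1 (fun M : 'M[R]_3 => M l k) (mulmxV uA).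
  by rewrite !mxE eq_sym => <-; apply: eq_bigr => i _; rewrite mulrC.
Qed.

Lemma double_sc_transf A f ft :
  double_sc (transf A f) (transd A ft) =
  change_sc (double_mx A) (double_invmx A) (double_sc f ft).
Proof.
apply/funext => a; apply/funext => b; apply/funext => c; rewrite change_scE.
case: a => [i|i]; case: b => [j|j]; case: c => [k|k];
  rewrite ?sum_double_mx_inl ?sum_double_mx_inr;
  under eq_bigr do rewrite ?sum_double_mx_inl ?sum_double_mx_inr;
  under eq_bigr do under eq_bigr do rewrite ?sum_double_invmx_inl ?sum_double_invmx_inr;
  rewrite /= /transf /transd !sum3 /=; ring.
Qed.

Lemma manin_triple_transf A f ft : A \in unitmx ->
  manin_triple f ft -> manin_triple (transf A f) (transd A ft).
Proof.
move=> uA [DN DJ]; rewrite /manin_triple double_sc_transf; split.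
  exact: change_scN.
move=> a b c e; have := change_sc_jacobiator (double_sc f ft) a b c e (double_mxK uA).
rewrite /jacobiator => ->.
do 4!(apply: big1 => ? _); by rewrite DJ mulr0.
Qed.

Lemma mt_iso_eq A f ft f' ft' : A \in unitmx ->
  f' = transf A f -> ft' = transd A ft -> mt_iso f ft f' ft'.
Proof. by move=> uA -> ->; exists A. Qed.

Lemma mt_iso_sym f ft f' ft' : mt_iso f ft f' ft' -> mt_iso f' ft' f ft.
Proof.
move=> [A [uA [/strconst_ext-> /strconst_ext->]]].
by apply: (mt_iso_eq (A := invmx A)); rewrite ?unitmx_inv ?transfK ?transdK.
Qed.

Lemma mt_iso_trans f ft f' ft' f'' ft'' :
  mt_iso f ft f' ft' -> mt_iso f' ft' f'' ft'' -> mt_iso f ft f'' ft''.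
Proof.
move=> [A [uA [/strconst_ext-> /strconst_ext->]]] [B [uB [/strconst_ext-> /strconst_ext->]]].
by apply: (mt_iso_eq (A := A *m B)); rewrite ?unitmx_mul ?uA ?transfM ?transdM.
Qed.

Lemma lie_iso_manin_triple f f' ft' : lie_iso f f' -> manin_triple f' ft' ->
  exists ft, manin_triple f ft /\ mt_iso f ft f' ft'.
Proof.
move=> [A [uA /strconst_ext f'E]] mt'; exists (transd (invmx A) ft'); split.
  have uA' : invmx A \in unitmx by rewrite unitmx_inv.
  by have := manin_triple_transf uA' mt'; rewrite f'E transfK.
by apply: (mt_iso_eq uA) => //; rewrite transdM ?unitmx_inv // mulVmx // transd1.
Qed.

End StructureConstants3.

Lemma unitmx_row_neq0 (F : fieldType) n (M : 'M[F]_n) i : M \in unitmx -> row i M != 0.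
Proof.
move=> uM; apply/eqP; rewrite rowE => /(congr1 (mulmx^~ (invmx M))).
rewrite mulmxK // mul0mx => /matrixP/(_ 0 i).
by rewrite !mxE !eqxx => /eqP; rewrite oner_eq0.
Qed.

Lemma unitmx_col_neq0 (F : fieldType) n (M : 'M[F]_n) j : M \in unitmx -> col j M != 0.
Proof.
move=> uM; apply/eqP; rewrite colE => /(congr1 (mulmx (invmx M))).
rewrite mulKmx // mulmx0 => /matrixP/(_ j 0).
by rewrite !mxE !eqxx => /eqP; rewrite oner_eq0.
Qed.

Lemma eq_lincomb1 (R : comPzRingType) (c x y l r : R) :
  l = r -> x - y = c * (l - r) -> x = y.
Proof. by move=> -> /eqP; rewrite subrr mulr0 subr_eq0 => /eqP. Qed.

Lemma eq_lincomb2 (R : comPzRingType) (c1 c2 x y l1 r1 l2 r2 : R) :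
  l1 = r1 -> l2 = r2 -> x - y = c1 * (l1 - r1) + c2 * (l2 - r2) -> x = y.
Proof. by move=> -> -> /eqP; rewrite !subrr !mulr0 addr0 subr_eq0 => /eqP. Qed.

Arguments eq_lincomb1 {R} c {x y l r}.
Arguments eq_lincomb2 {R} c1 c2 {x y l1 r1 l2 r2}.

Lemma mulmx1_invmx (F : comUnitRingType) n (P Q : 'M[F]_n) :
  P *m Q = 1%:M -> P \in unitmx /\ invmx P = Q.
Proof.
move=> PQ; have uP : P \in unitmx by case/mulmx1_unit: PQ.
by split=> //; rewrite -[LHS]mulmx1 -PQ mulmxA mulVmx // mul1mx.
Qed.

Section BianchiVII.
Variables (R : realType) (a : R).
Hypothesis a_gt0 : 0 < a.

Let a_neq0 : a != 0. Proof. by rewrite gt_eqF. Qed.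
Let a2_neq0 : 1 + a ^+ 2 != 0. Proof. by rewrite lt0r_neq0 // ltr_wpDr ?sqr_ge0. Qed.

Lemma bianchiVII_aut (M : 'M[R]_3) :
  M \in unitmx -> transf M (bianchiVII a) = bianchiVII a ->
  [/\ M o0 o0 = 1, M o0 o1 = 0, M o0 o2 = 0, M o1 o2 = - M o2 o1 & M o2 o2 = M o1 o1].
Proof.
move=> uM autM; have hom p i j := transf_hom (bianchiVII a) p i j uM.
rewrite autM in hom.
have row0 := unitmx_row_neq0 o0 uM; have col1 := unitmx_col_neq0 o1 uM.
have := hom o0 o0 o1; have := hom o0 o2 o0.
have := hom o1 o0 o1; have := hom o2 o0 o1; have := hom o1 o2 o0; have := hom o2 o2 o0.
rewrite !sum3.
set m00 := M o0 o0; set m01 := M o0 o1; set m02 := M o0 o2.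
set m10 := M o1 o0; set m11 := M o1 o1; set m12 := M o1 o2.
set m20 := M o2 o0; set m21 := M o2 o1; set m22 := M o2 o2.
rewrite /bianchiVII /sc_of /vec3 /= => e4 e3 e2 e1 e5 e6.
have m01_0 : m01 = 0.
  by apply: (mulfI a2_neq0); rewrite mulr0; apply: (eq_lincomb2 1 (- a) e5 e6); ring.
have m02_0 : m02 = 0.
  by apply: (mulfI a2_neq0); rewrite mulr0; apply: (eq_lincomb2 a 1 e5 e6); ring.
rewrite m01_0 m02_0 in e1 e2 e3 e4.
have m00_neq0 : m00 != 0.
  apply: contraNneq row0 => m00_0; apply/eqP/rowP => j; rewrite !mxE.
  by case: (ord3P j) => ->.
have N_neq0 : m11 ^+ 2 + m21 ^+ 2 != 0.
  apply: contraNneq col1 => /eqP; rewrite paddr_eq0 ?sqr_ge0 // !sqrf_eq0.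
  move=> /andP[/eqP m11_0 /eqP m21_0]; apply/eqP/colP => i; rewrite !mxE.
  by case: (ord3P i) => ->.
have m12E : m12 = a * m11 * (1 - m00) - m00 * m21 by apply: (eq_lincomb1 1 e1); ring.
have m22E : m22 = m00 * m11 + a * m21 * (1 - m00) by apply: (eq_lincomb1 1 e2); ring.
rewrite m12E m22E in e3 e4.
have : 2 * a * (1 - m00) * m00 * (m11 ^+ 2 + m21 ^+ 2) = 0.
  by apply: (eq_lincomb2 (- m21) m11 e3 e4); ring.
move/eqP; rewrite !mulf_eq0 (negbTE N_neq0) (negbTE m00_neq0) (negbTE a_neq0) pnatr_eq0 subr_eq0 /=.
rewrite !orbF => /eqP m00_1.
by split=> //; rewrite ?m12E ?m22E -m00_1; ring.
Qed.

Definition bianchiVII_dual (t s p q : R) : strconst R :=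
  sc_of (vec3 (a * q - p) t (- a * t)) (vec3 s (a * p - q) (a * q + p))
        (vec3 (a * p + q) (- a * t) (- t)).

Definition label_t (l : dual_label R) : R := if l is L_VII b then - b / a else 0.

Definition label_s (l : dual_label R) : R :=
  match l with L_II_i => 1 | L_II_ii => -1 | _ => 0 end.

Lemma dual_scE l : dual_sc a l = bianchiVII_dual (label_t l) (label_s l) 0 0.
Proof.
rewrite /bianchiVII_dual; case: l => [|||b] /=;
  by congr (sc_of (vec3 _ _ _) (vec3 _ _ _) (vec3 _ _ _)); field.
Qed.

Lemma strconst_sc_of (ft : strconst R) : (forall i j k, ft i j k = - ft j i k) ->
  ft = sc_of (vec3 (ft o0 o1 o0) (ft o0 o1 o1) (ft o0 o1 o2))
             (vec3 (ft o1 o2 o0) (ft o1 o2 o1) (ft o1 o2 o2))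
             (vec3 (ft o2 o0 o0) (ft o2 o0 o1) (ft o2 o0 o2)).
Proof.
move=> ftN; have ft_diag i k : ft i i k = 0.
  by apply/eqP; rewrite -[_ == 0](@mulrn_eq0 _ _ 2) mulr2n {1}ftN addNr.
apply: strconst_ext => i j k.
by case: (ord3P i) => ->; case: (ord3P j) => ->; case: (ord3P k) => ->;
  rewrite ?ft_diag /sc_of /vec3 /=.
Qed.

Lemma bianchiVII_dual_jacobi x0 x1 x2 x3 x4 x5 x6 x7 x8 :
  manin_triple (bianchiVII a)
    (sc_of (vec3 x0 x1 x2) (vec3 x3 x4 x5) (vec3 x6 x7 x8)) ->
  [/\ x2 = - a * x1, x7 = - a * x1, x8 = - x1,
      x0 + x5 + a * x4 - a * x6 = 0 &
      - a * x0 - x4 - x6 + a * x5 = 0 /\ x0 * x4 - x5 * x6 = 2 * x1 * x3].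
Proof.
move=> [_ jac].
have := jac (inl o0) (inl o1) (inr o0) (inl o1).
have := jac (inl o0) (inl o1) (inr o0) (inl o2).
have := jac (inl o0) (inl o1) (inr o1) (inl o2).
have := jac (inl o0) (inl o2) (inr o1) (inl o2).
have := jac (inl o0) (inr o0) (inr o1) (inl o2).
have := jac (inl o1) (inl o2) (inr o1) (inl o2).
rewrite !big_sumType !sum3 /bianchiVII /sc_of /vec3 /= => j6 j5 j4 j3 j2 j1.
have x7E : x7 = x2 by lra.
have x8E : x8 = - x1 by lra.
rewrite x7E x8E in j3 j4 j5 j6 *.
have x2E : x2 = - a * x1 by lra.
by rewrite x2E; split => //; [lra | split; lra].
Qed.

Lemma bianchiVII_dual_param ft : manin_triple (bianchiVII a) ft ->
  exists t s p q, t * s = - a * (p ^+ 2 + q ^+ 2) /\ ft = bianchiVII_dual t s p q.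
Proof.
move=> mt; have ftN i j k : ft i j k = - ft j i k := mt.1 (inr i) (inr j) (inr k).
have ftE := strconst_sc_of ftN.
rewrite ftE in mt *.
move: mt; set x0 := ft o0 o1 o0; set x1 := ft o0 o1 o1; set x2 := ft o0 o1 o2.
set x3 := ft o1 o2 o0; set x4 := ft o1 o2 o1; set x5 := ft o1 o2 o2.
set x6 := ft o2 o0 o0; set x7 := ft o2 o0 o1; set x8 := ft o2 o0 o2.
clearbody x0 x1 x2 x3 x4 x5 x6 x7 x8 => /bianchiVII_dual_jacobi[-> -> -> L1 [L2 Q]].
(* coordinates in which the two linear constraints L1, L2 decouple *)
have [p [q [x0E x6E]]] : exists p q, x0 = a * q - p /\ x6 = a * p + q.
  exists ((a * x6 - x0) / (1 + a ^+ 2)), ((a * x0 + x6) / (1 + a ^+ 2)).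
  by split; field.
subst x0 x6.
have x4E : x4 = a * p - q.
  by apply: (mulfI a2_neq0); apply: (eq_lincomb2 a (-1) L1 L2); ring.
have x5E : x5 = a * q + p.
  by apply: (mulfI a2_neq0); apply: (eq_lincomb2 1 a L1 L2); ring.
subst x4 x5; exists x1, x3, p, q; split => //.
have two_neq0 : (2 : R) != 0 by rewrite pnatr_eq0.
by apply: (mulfI two_neq0); apply: (eq_lincomb1 (-1) Q); ring.
Qed.

Definition mx3 (m00 m01 m02 m10 m11 m12 m20 m21 m22 : R) : 'M[R]_3 :=
  \matrix_(i, j) nth 0 (nth [::] [:: [:: m00; m01; m02]; [:: m10; m11; m12];
                                   [:: m20; m21; m22]] i) j.

Definition scale_mx (u : R) : 'M[R]_3 := mx3 1 0 0 0 u 0 0 0 u.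
Definition shear_mx (v w : R) : 'M[R]_3 := mx3 1 0 0 v 1 0 w 0 1.

Lemma scale_mxK u : u != 0 -> scale_mx u *m scale_mx u^-1 = 1%:M.
Proof.
move=> u_neq0; apply/matrixP => i j; rewrite !mxE sum3 !mxE.
by case: (ord3P i) => ->; case: (ord3P j) => ->; rewrite /= ?divff //; ring.
Qed.

Lemma shear_mxK v w : shear_mx v w *m shear_mx (- v) (- w) = 1%:M.
Proof.
apply/matrixP => i j; rewrite !mxE sum3 !mxE.
by case: (ord3P i) => ->; case: (ord3P j) => ->; rewrite /=; ring.
Qed.

Lemma scale_mx_aut u : u != 0 -> transf (scale_mx u) (bianchiVII a) = bianchiVII a.
Proof.
move=> u_neq0; have [_ invE] := mulmx1_invmx (scale_mxK u_neq0).
apply: strconst_ext => i j n; rewrite /transf invE !sum3 !mxE.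
by case: (ord3P i) => ->; case: (ord3P j) => ->; case: (ord3P n) => ->;
  rewrite /bianchiVII /sc_of /vec3 /=; field.
Qed.

Lemma shear_mx_aut v w : transf (shear_mx v w) (bianchiVII a) = bianchiVII a.
Proof.
have [_ invE] := mulmx1_invmx (shear_mxK v w).
apply: strconst_ext => i j n; rewrite /transf invE !sum3 !mxE.
by case: (ord3P i) => ->; case: (ord3P j) => ->; case: (ord3P n) => ->;
  rewrite /bianchiVII /sc_of /vec3 /=; ring.
Qed.

Lemma transd_scale_mx u s : u != 0 ->
  transd (scale_mx u^-1) (bianchiVII_dual 0 s 0 0) = bianchiVII_dual 0 (s * u ^+ 2) 0 0.
Proof.
move=> u_neq0; have [_ invE] := mulmx1_invmx (scale_mxK (invr_neq0 u_neq0)).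
apply: strconst_ext => i j n; rewrite /transd invE invrK !sum3 !mxE.
by case: (ord3P i) => ->; case: (ord3P j) => ->; case: (ord3P n) => ->;
  rewrite /bianchiVII_dual /sc_of /vec3 /=; field.
Qed.

Lemma transd_shear_mx v w t :
  transd (shear_mx v w) (bianchiVII_dual t 0 0 0) =
  bianchiVII_dual t (- a * t * (v ^+ 2 + w ^+ 2)) (- t * v) (- t * w).
Proof.
have [_ invE] := mulmx1_invmx (shear_mxK v w).
apply: strconst_ext => i j n; rewrite /transd invE !sum3 !mxE.
by case: (ord3P i) => ->; case: (ord3P j) => ->; case: (ord3P n) => ->;
  rewrite /bianchiVII_dual /sc_of /vec3 /=; ring.
Qed.

Lemma mt_iso_dual_VII t s p q : t != 0 -> t * s = - a * (p ^+ 2 + q ^+ 2) ->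
  mt_iso (bianchiVII a) (dual_sc a (L_VII (- a * t)))
         (bianchiVII a) (bianchiVII_dual t s p q).
Proof.
move=> t_neq0 tsE; apply: (mt_iso_eq (A := shear_mx (- p / t) (- q / t))).
- by case: (mulmx1_invmx (shear_mxK (- p / t) (- q / t))).
- by rewrite shear_mx_aut.
rewrite dual_scE (_ : label_t (L_VII (- a * t)) = t); last by rewrite /=; field.
rewrite transd_shear_mx; congr bianchiVII_dual; last 2 first.
- by field.
- by field.
by apply: (mulfI t_neq0); rewrite tsE; field.
Qed.

Lemma mt_iso_dual_II s : exists2 l, valid_label l &
  mt_iso (bianchiVII a) (dual_sc a l) (bianchiVII a) (bianchiVII_dual 0 s 0 0).
Proof.
have [l [u [l_valid l_t u_neq0 ->]]] : exists l u,
    [/\ valid_label l, label_t l = 0, u != 0 & s = label_s l * u ^+ 2].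
  have [s_lt0|s_gt0|->] := ltrgtP s 0.
  - exists (L_II_ii R), (Num.sqrt (- s)); rewrite sqr_sqrtr ?oppr_ge0 ?ltW //.
    by split=> //; [rewrite gt_eqF // sqrtr_gt0 oppr_gt0 | rewrite /= mulN1r opprK].
  - exists (L_II_i R), (Num.sqrt s); rewrite sqr_sqrtr ?ltW //.
    by split=> //; [rewrite gt_eqF // sqrtr_gt0 | rewrite /= mul1r].
  - by exists (L_I R), 1; rewrite /= mul0r oner_eq0.
exists l => //; apply: (mt_iso_eq (A := scale_mx u^-1)).
- by case: (mulmx1_invmx (scale_mxK (invr_neq0 u_neq0))).
- by rewrite scale_mx_aut ?invr_neq0.
by rewrite dual_scE l_t transd_scale_mx.
Qed.

Lemma bianchiVII_dual_classification ft : manin_triple (bianchiVII a) ft ->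
  exists2 l, valid_label l & mt_iso (bianchiVII a) (dual_sc a l) (bianchiVII a) ft.
Proof.
move=> /bianchiVII_dual_param[t [s [p [q [tsE ->]]]]].
have [t0|t_neq0] := eqVneq t 0; last first.
  exists (L_VII (- a * t)); last exact: mt_iso_dual_VII.
  by rewrite /= mulf_neq0 ?oppr_eq0.
move/eqP: tsE; rewrite t0 mul0r eq_sym mulf_eq0 oppr_eq0 (negbTE a_neq0) /=.
rewrite paddr_eq0 ?sqr_ge0 // !sqrf_eq0 => /andP[/eqP -> /eqP ->].
exact: mt_iso_dual_II.
Qed.

Lemma bianchiVII_dual_invariants (M : 'M[R]_3) t1 s1 t2 s2 :
  M \in unitmx -> transf M (bianchiVII a) = bianchiVII a ->
  transd M (bianchiVII_dual t1 s1 0 0) = bianchiVII_dual t2 s2 0 0 ->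
  t2 = t1 /\ exists2 N, 0 < N & s1 = s2 * N.
Proof.
move=> uM autM dualM.
have [m00 m01 m02 m12 m22] := bianchiVII_aut uM autM.
have hom p q n := transd_hom (bianchiVII_dual t1 s1 0 0) p q n uM.
rewrite dualM in hom.
have := hom o0 o1 o1; have := hom o0 o1 o2; have := hom o1 o2 o0.
rewrite !sum3 m00 m01 m02 m12 m22.
have : 0 < M o1 o1 ^+ 2 + M o2 o1 ^+ 2.
  rewrite lt0r addr_ge0 ?sqr_ge0 // andbT paddr_eq0 ?sqr_ge0 // !sqrf_eq0.
  apply: contra (unitmx_col_neq0 o1 uM) => /andP[/eqP m11 /eqP m21].
  by apply/eqP/colP => i; rewrite !mxE; case: (ord3P i) => ->.
set u1 := M o1 o1; set u2 := M o2 o1 => N_gt0.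
rewrite /bianchiVII_dual /sc_of /vec3 /= => e3 e2 e1.
split; last by exists (u1 ^+ 2 + u2 ^+ 2) => //; apply: (eq_lincomb1 (-1) e3); ring.
have : (t2 - t1) * ((1 + a ^+ 2) * (u1 ^+ 2 + u2 ^+ 2)) = 0.
  by apply: (eq_lincomb2 (u1 - a * u2) (- (a * u1 + u2)) e1 e2); ring.
move/eqP; rewrite !mulf_eq0 (negbTE a2_neq0) (gt_eqF N_gt0) subr_eq0 !orbF.
by move/eqP.
Qed.

Definition label_of (t s : R) : dual_label R :=
  if t != 0 then L_VII (- a * t)
  else if 0 < s then L_II_i R else if s < 0 then L_II_ii R else L_I R.

Lemma label_ofK l : valid_label l -> label_of (label_t l) (label_s l) = l.
Proof.
rewrite /label_of; case: l => [|||b] /=; rewrite ?eqxx ?ltxx ?ltr01 ?oppr_gt0 ?ltr10 ?ltrN10 //.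
move=> b_neq0; rewrite mulf_eq0 oppr_eq0 invr_eq0 (negbTE b_neq0) (negbTE a_neq0) /=.
by congr L_VII; field.
Qed.

Lemma label_of_scale t s N : 0 < N -> label_of t (s * N) = label_of t s.
Proof. by move=> N_gt0; rewrite /label_of pmulr_lgt0 // pmulr_llt0. Qed.

Lemma dual_label_unique l1 l2 : valid_label l1 -> valid_label l2 ->
  mt_iso (bianchiVII a) (dual_sc a l1) (bianchiVII a) (dual_sc a l2) -> l2 = l1.
Proof.
move=> v1 v2 [M [uM [/strconst_ext autM /strconst_ext dualM]]].
rewrite !dual_scE in dualM.
have [tE [N N_gt0 sE]] := bianchiVII_dual_invariants uM (esym autM) (esym dualM).
by rewrite -(label_ofK v1) -(label_ofK v2) sE label_of_scale // tE.
Qed.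

End BianchiVII.

Theorem mainTheorem3 (R : realType) (a : R) (ha : 0 < a)
    (f' ft' : strconst R) :
  manin_triple f' ft' ->
  lie_iso (bianchiVII a) f' ->
  exists l : dual_label R,
    valid_label l /\ mt_iso (bianchiVII a) (dual_sc a l) f' ft' /\
    (forall l' : dual_label R,
       valid_label l' -> mt_iso (bianchiVII a) (dual_sc a l') f' ft' -> l' = l).
Proof.
move=> mt' isoG.
have [ft [mt iso]] := lie_iso_manin_triple isoG mt'.
have [l l_valid iso_l] := bianchiVII_dual_classification ha mt.
exists l; split; [exact: l_valid | split; first exact: mt_iso_trans iso_l iso].
move=> l' l'_valid iso_l'.
apply: (dual_label_unique ha l_valid l'_valid).
exact: mt_iso_trans (mt_iso_trans iso_l iso) (mt_iso_sym iso_l').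
Qed.
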